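(* Let $K$ be a $W$-set for a continuous flow on a compact manifold $M$ which is not global, and let $\mathcal{W}$ be its witness region. Then $L:=M\setminus\mathcal{W}$ is nonempty and is the maximal compact invariant set contained in $M\setminus K$; consequently $L$ is an isolated invariant set. Moreover, $K\cup L$ is a global $W$-set.
   Context: For a continuous flow, $\omega(x)$ and $\omega^*(x)$ denote the $\omega$- and $\alpha$-limit sets of $x$. A compact invariant set is isolated if it is the maximal invariant subset of some compact neighbourhood of itself. Let $K$ be a compact invariant set. A point $x$ is witnessed by $K$ if its trajectory meets every neighbourhood of $K$ (equivalently $(\omega(x)\cup\omega^*(x))\cap K\neq\emptyset$). $K$ is a $W$-set if it has a neighbourhood all of whose points are witnessed by $K$; its witness region $\mathcal{W}(K)$ is the set of all points witnessed by $K$; $K$ is global if $\mathcal{W}(K)=M$. *)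

From HB Require Import structures.
From mathcomp Require Import all_boot all_order all_algebra.
From mathcomp Require Import all_classical all_reals all_analysis.
Set Implicit Arguments. Unset Strict Implicit. Unset Printing Implicit Defensive.
Import Order.TTheory GRing.Theory Num.Theory.
Import numFieldNormedType.Exports.
Local Open Scope classical_set_scope.
Local Open Scope ring_scope.

Section Defs.
Variable R : realType.

Definition is_topological_manifold (M : topologicalType) : Prop :=
  hausdorff_space M /\
  exists n : nat, forall x : M,
    exists (U : set M) (V : set 'rV[R]_n) (f : M -> 'rV[R]_n) (g : 'rV[R]_n -> M),
      [/\ open U, U x, open V, f @` U `<=` V & g @` V `<=` U] /\
      [/\ {within U, continuous f}, {within V, continuous g},
          {in U, cancel f g} & {in V, cancel g f}].

Variable M : topologicalType.

Definition is_flow (phi : R -> M -> M) : Prop :=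
  [/\ continuous (fun p : R * M => phi p.1 p.2),
      forall x, phi 0 x = x &
      forall s t x, phi (s + t) x = phi s (phi t x)].

Variable phi : R -> M -> M.

Definition flow_invariant (S : set M) : Prop :=
  forall t x, S x -> S (phi t x).

Definition nbhd_of (K U : set M) : Prop := K `<=` interior U.

Definition witnessed (K : set M) (x : M) : Prop :=
  forall U, nbhd_of K U -> exists t : R, U (phi t x).

Definition witness_region (K : set M) : set M := [set x | witnessed K x].

Definition W_set (K : set M) : Prop :=
  [/\ compact K, flow_invariant K &
      exists U, nbhd_of K U /\ (forall x, U x -> witnessed K x)].

Definition global_set (K : set M) : Prop := witness_region K = setT.

Definition isolated_invariant (K : set M) : Prop :=
  [/\ compact K, flow_invariant K &
      exists N, [/\ compact N, nbhd_of K N &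
                    forall S, flow_invariant S -> S `<=` N -> S `<=` K]].

End Defs.

From HB Require Import structures.
From mathcomp Require Import all_boot all_order all_algebra.
From mathcomp Require Import all_classical all_reals all_analysis.
Set Implicit Arguments. Unset Strict Implicit. Unset Printing Implicit Defensive.
Import Order.TTheory GRing.Theory Num.Theory.
Import numFieldNormedType.Exports.
Local Open Scope classical_set_scope.
Local Open Scope ring_scope.

(* Being witnessed is a property of whole orbits, and by continuity of the
   flow an orbit entering the interior of the W-neighbourhood of K stays
   witnessed nearby, so the witness region W is open and invariant; its
   complement L is therefore compact and invariant.  A compact invariant S
   disjoint from K has an open complement which is a neighbourhood of K
   avoided by every orbit in S, so S lies in L.  Normality of the compact
   Hausdorff space M gives a closed neighbourhood C of K inside W, and the
   complement of its interior isolates L.  Finally every point is either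
   witnessed by K or lies in L, so K `|` L is global. *)

Section WitnessRegion.
Variables (R : realType) (M : topologicalType) (phi : R -> M -> M).

Lemma open_subset_nbhd_of (K U V : set M) :
  open V -> K `<=` V -> V `<=` U -> nbhd_of K U.
Proof.
move=> oV KV VU x /KV Vx; apply: (filterS VU).
exact: open_nbhs_nbhs.
Qed.

Lemma open_nbhd_of (K U : set M) : open U -> K `<=` U -> nbhd_of K U.
Proof. by move=> oU KU; apply: open_subset_nbhd_of oU KU _. Qed.

Lemma witnessed_subset (K K' : set M) (x : M) :
  K `<=` K' -> witnessed phi K x -> witnessed phi K' x.
Proof. by move=> KK' wx U nU; apply: wx => y /KK' /nU. Qed.

Lemma compact_invariant_witness_regionC (K S : set M) :
  hausdorff_space M -> compact S -> flow_invariant phi S -> S `<=` ~` K ->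
  S `<=` ~` witness_region phi K.
Proof.
move=> hM cS iS SK x Sx wx.
have nSC : nbhd_of K (~` S).
  apply: open_nbhd_of; first exact/closed_openC/(compact_closed hM cS).
  by move=> y Ky Sy; exact: SK Sy Ky.
by have [t St] := wx _ nSC; exact/St/iS.
Qed.

Hypothesis phi_flow : is_flow phi.

Lemma flow_continuous (t : R) : continuous (phi t).
Proof.
case: phi_flow => cont _ _ x.
exact: (continuous_comp (cvg_pair (cvg_cst t) cvg_id) (cont (t, x))).
Qed.

Lemma flow_invariantC (S : set M) :
  flow_invariant phi S -> flow_invariant phi (~` S).
Proof.
case: phi_flow => _ phi0 phiD iS t x Sx Stx; apply: Sx.
by rewrite -[x]phi0 -(addNr t) phiD; exact: iS.
Qed.

Lemma witnessed_flow (K : set M) (s : R) (x : M) :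
  witnessed phi K (phi s x) <-> witnessed phi K x.
Proof.
case: phi_flow => _ _ phiD; split=> wx U nU; have [t Ut] := wx U nU.
- by exists (t + s); rewrite phiD.
- by exists (t - s); rewrite -phiD subrK.
Qed.

Lemma flow_invariant_witness_region (K : set M) :
  flow_invariant phi (witness_region phi K).
Proof. by move=> t x wx; apply/witnessed_flow. Qed.

Lemma sub_witness_region (K : set M) : K `<=` witness_region phi K.
Proof.
case: phi_flow => _ phi0 _ x Kx U nU.
by exists 0; rewrite phi0; apply: interior_subset; exact: nU.
Qed.

Lemma global_setU_witness_regionC (K : set M) :
  global_set phi (K `|` ~` witness_region phi K).
Proof.
apply/seteqP; split=> // x _ /=.
have [wx|nwx] := pselect (witnessed phi K x).
  by apply: witnessed_subset wx => y Ky; left.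
by apply: sub_witness_region; right.
Qed.

Lemma open_witness_region (K : set M) : W_set phi K -> open (witness_region phi K).
Proof.
case=> _ _ [U [nU wU]]; rewrite openE => x wx.
have nUo : nbhd_of K U° by apply: open_nbhd_of; [exact: open_interior | exact: nU].
have [t Ut] := wx _ nUo.
have : nbhs x (phi t @^-1` U) by exact: flow_continuous.
by apply: filterS => y /wU /witnessed_flow.
Qed.

Lemma compact_witness_regionC (K : set M) :
  compact [set: M] -> W_set phi K -> compact (~` witness_region phi K).
Proof.
move=> cM WK; apply: (subclosed_compact _ cM) => //.
exact/open_closedC/open_witness_region.
Qed.

Lemma isolated_invariant_witness_regionC (K : set M) :
  hausdorff_space M -> compact [set: M] -> W_set phi K ->
  isolated_invariant phi (~` witness_region phi K).
Proof.
move=> hM cM WK; have [cK _ _] := WK.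
split; [exact: compact_witness_regionC | exact/flow_invariantC/flow_invariant_witness_region |].
have nW : set_nbhs K (witness_region phi K).
  move=> x Kx; apply: open_nbhs_nbhs; split; first exact: open_witness_region.
  exact: sub_witness_region.
have [C KC clCW] := compact_normal hM cM (compact_closed hM cK) nW.
exists (~` C°); split.
- by apply: (subclosed_compact _ cM) => //; exact/open_closedC/open_interior.
- apply: (@open_subset_nbhd_of _ _ (~` closure C)).
  + exact/closed_openC/closed_closure.
  + by move=> x nwx /clCW.
  + by move=> x nCx /interior_subset Cx; apply/nCx/subset_closure.
- move=> S iS SN x Sx wx.
  have nC : nbhd_of K C° by apply: open_nbhd_of; [exact: open_interior | exact: KC].
  by have [t Ct] := wx _ nC; exact: (SN _ (iS t x Sx)).
Qed.

End WitnessRegion.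

Theorem corollary7p2 (R : realType) (M : topologicalType) (phi : R -> M -> M)
  (K : set M) :
  is_topological_manifold R M -> compact [set: M] -> is_flow phi ->
  W_set phi K -> ~ global_set phi K ->
  let L := ~` witness_region phi K in
  [/\ L !=set0,
      [/\ compact L, flow_invariant phi L, L `<=` ~` K &
          forall S : set M, compact S -> flow_invariant phi S -> S `<=` ~` K -> S `<=` L],
      isolated_invariant phi L,
      W_set phi (K `|` L) &
      global_set phi (K `|` L)].
Proof.
move=> [hM _] cM flow WK nglobal L.
have [cK iK _] := WK.
have cL : compact L by exact: compact_witness_regionC.
have iL : flow_invariant phi L by exact/flow_invariantC/flow_invariant_witness_region.
have gKL : global_set phi (K `|` L) by exact: global_setU_witness_regionC.
split.
- apply: contrapT => L0; apply: nglobal; apply/seteqP; split=> // x _.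
  by apply: contrapT => nwx; apply: L0; exists x.
- split=> //; last by move=> S; exact: (compact_invariant_witness_regionC hM).
  by move=> x Lx Kx; exact/Lx/sub_witness_region.
- exact: isolated_invariant_witness_regionC.
- split; first exact: compactU.
  + by move=> t x [Kx|Lx]; [left; exact: iK | right; exact: iL].
  + exists setT; split; first by move=> x _; rewrite interiorT.
    by move=> x _; rewrite -[witnessed _ _ _]/(witness_region _ _ x) gKL.
- exact: gKL.
Qed.
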